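(* Let $C$ be a linear code over $\mathbb{F}_q$ of dimension $k$ with weight hierarchy $(d_1,\dots,d_k)$. Assume that there exists an integer $\alpha$ such that \[ d_i = \alpha\,\frac{q^i-1}{q^{i-1}(q-1)} \quad \text{for all } 1\leqslant i\leqslant k. \] Then $C$ is a constant weight code, and all its non-zero codewords have weight $\alpha$.
   Context: For a subcode $D \subseteq C \subseteq \mathbb{F}_q^n$ (a linear subspace), $\mathrm{Supp}(D)=\{x\in\{1,\dots,n\} : \exists d\in D,\ d_x\neq 0\}$ and $w(D)=\#\mathrm{Supp}(D)$; the weight of a codeword is the weight of the subcode it spans. For $1\leqslant r\leqslant k$, $d_r=\min\{w(D) : D\subseteq C \text{ a subcode of dimension } r\}$, and $(d_1,\dots,d_k)$ is the weight hierarchy. A constant weight code is a code all of whose non-zero codewords have the same weight. *)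

From HB Require Import structures.
From mathcomp Require Import all_boot all_order all_algebra all_field.
Set Implicit Arguments. Unset Strict Implicit. Unset Printing Implicit Defensive.
Import GRing.Theory.
Local Open Scope ring_scope.

Definition supp (F : finFieldType) (n : nat) (D : {vspace 'rV[F]_n}) : {set 'I_n} :=
  [set x : 'I_n | [exists d : 'rV[F]_n, (d \in D) && (d 0 x != 0)]].

Definition wt (F : finFieldType) (n : nat) (D : {vspace 'rV[F]_n}) : nat :=
  #|supp D|.

Definition cwt (F : finFieldType) (n : nat) (c : 'rV[F]_n) : nat := wt <[c]>%VS.

Definition is_gen_weight (F : finFieldType) (n : nat) (C : {vspace 'rV[F]_n})
    (r d : nat) : Prop :=
  (exists2 D : {vspace 'rV[F]_n}, ((D <= C)%VS && (\dim D == r)) & wt D = d) /\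
  (forall D : {vspace 'rV[F]_n}, (D <= C)%VS -> \dim D = r -> (d <= wt D)%N).

Definition constant_weight (F : finFieldType) (n : nat) (C : {vspace 'rV[F]_n}) : Prop :=
  forall c c' : 'rV[F]_n, c \in C -> c' \in C -> c != 0 -> c' != 0 -> cwt c = cwt c'.

(** Double counting the pairs (codeword c, coordinate x) with c_x <> 0 gives
    [\sum_(c in C) w(c) = w(C) (q^k - q^(k-1))]: each coordinate of Supp(C)
    is a non-zero linear form on C, so it vanishes exactly on a hyperplane.
    As [w(C) = d_k], the hypothesis for [i = k] and [i = 1] makes the right-hand
    side [d_1 (q^k - 1)] with [d_1 = alpha]; the [q^k - 1] non-zero codewords
    all have weight at least [d_1], so each has weight exactly [d_1]. *)
From HB Require Import structures.
From mathcomp Require Import all_boot all_order all_algebra all_field.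
Import GRing.Theory Num.Theory.
Local Open Scope ring_scope.

Lemma col_eq0 (R : nmodType) n (v : 'rV[R]_n) (x : 'I_n) :
  (col x v == 0) = (v 0 x == 0).
Proof.
apply/eqP/eqP => [/matrixP/(_ 0 0) | vx0]; first by rewrite !mxE.
by apply/matrixP => i j; rewrite !ord1 !mxE.
Qed.

Section CodeWeights.

Context {F : finFieldType} {n : nat}.
Implicit Types (C : {vspace 'rV[F]_n}) (c : 'rV[F]_n).

Lemma cwtE c : cwt c = #|[pred x | c 0 x != 0]|.
Proof.
apply: eq_card => x; rewrite !inE.
apply/existsP/idP => [[_ /andP [/vlineP [a ->]]] | cx0]; last first.
  by exists c; rewrite memv_line.
by rewrite mxE mulf_eq0 negb_or => /andP [].
Qed.

Lemma cwt0 : cwt (0 : 'rV[F]_n) = 0%N.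
Proof. by rewrite cwtE; apply: eq_card0 => x; rewrite !inE mxE eqxx. Qed.

Lemma card_coord_neq0 C (x : 'I_n) :
  x \in supp C ->
  #|[pred c in C | c 0 x != 0]| = (#|F| ^ \dim C - #|F| ^ (\dim C).-1)%N.
Proof.
rewrite inE => /existsP [c0 /andP [c0C c0x]].
pose f : 'Hom('rV[F]_n, 'M[F]_1) := linfun (mulmxr (delta_mx x 0)).
have fE v : f v = col x v by rewrite lfunE /= colE.
have dim_img : \dim (f @: C) = 1%N.
  apply/eqP; rewrite eqn_leq -[X in (_ <= X)%N](dimvf 'M[F]_1) dimvS ?subvf //.
  rewrite lt0n dimv_eq0; apply: contraNneq c0x => img0.
  by rewrite -col_eq0 -fE -memv0 -img0 memv_img.
have dim_ker : \dim (C :&: lker f) = (\dim C).-1.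
  by have := limg_ker_dim f C; rewrite dim_img addn1 => <-.
have card_ker : #|[predI C & [pred c : 'rV[F]_n | c 0 x == 0]]| = (#|F| ^ (\dim C).-1)%N.
  rewrite -dim_ker -card_vspace; apply: eq_card => v.
  by rewrite !inE memv_cap memv_ker fE col_eq0.
have := cardID [pred c : 'rV[F]_n | c 0 x == 0] C.
rewrite card_ker card_vspace => <-; rewrite addKn.
by apply: eq_card => v; rewrite !inE andbC.
Qed.

Lemma sum_cwt C :
  (\sum_(c in C) cwt c = wt C * (#|F| ^ \dim C - #|F| ^ (\dim C).-1))%N.
Proof.
under eq_bigr => c _ do rewrite cwtE -sum1_card big_mkcond /=.
rewrite exchange_big /= /wt -sum_nat_const [RHS]big_mkcond /=.
apply: eq_bigr => x _; rewrite -big_mkcondr /= sum1_card.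
case: ifP => [/card_coord_neq0 <- | x_supp]; first by apply: eq_card => v.
apply: eq_card0 => v; rewrite !inE; apply: contraFF x_supp => /andP [vC vx].
by rewrite inE; apply/existsP; exists v; rewrite vC.
Qed.

Lemma gen_weight_full {C m} :
  is_gen_weight C (\dim C) m -> m = wt C.
Proof.
move=> [[D /andP [DC /eqP dimD] <-] _].
suff /eqP -> : D == C by [].
by rewrite eqEdim DC dimD /=.
Qed.

Lemma gen_weight1_le_cwt {C m c} :
  is_gen_weight C 1 m -> c \in C -> c != 0 -> (m <= cwt c)%N.
Proof. by move=> [_ min_m] cC c0; apply: min_m; rewrite ?dim_vline ?c0 -?memvE. Qed.

Lemma card_vspace_neq0 C :
  #|[pred c in C | c != 0]| = (#|F| ^ \dim C - 1)%N.
Proof.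
rewrite -card_vspace [in RHS](cardD1 0) mem0v add1n subSS subn0.
by apply: eq_card => v; rewrite !inE andbC.
Qed.

End CodeWeights.

Lemma eq_lb_of_sum {I : finType} {P : pred I} {f : I -> nat} {m : nat} :
  (forall i, P i -> m <= f i)%N -> (\sum_(i | P i) f i = #|P| * m)%N ->
  forall i, P i -> f i = m.
Proof.
move=> le_m_f; rewrite -sum1_card big_distrl /= => sum_f i Pi.
have [_] := leqif_sum (fun j Pj => leqif_eq (le_m_f j Pj)).
rewrite sum_f /= mul1n eqxx => /esym/forallP/(_ i).
by rewrite Pi => /eqP.
Qed.

Lemma natr_hierarchy_eq {q k a b : nat} : (1 < q)%N -> (0 < k)%N ->
  a%:R = b%:R * ((q ^ k)%:R - 1) / ((q ^ k.-1)%:R * (q%:R - 1)) :> rat ->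
  (a * (q ^ k - q ^ k.-1) = b * (q ^ k - 1))%N.
Proof.
move=> q_gt1 k_gt0 a_eq; apply/eqP; rewrite -(eqr_nat rat) !natrM.
have q_pos : (0 < q)%N by exact: ltnW.
rewrite !natrB ?leq_exp2l ?leq_pred ?expn_gt0 ?q_pos // a_eq.
have -> : (q ^ k)%:R - (q ^ k.-1)%:R = (q ^ k.-1)%:R * (q%:R - 1) :> rat.
  by rewrite mulrBr mulr1 -natrM -expnSr prednK.
rewrite mulfVK // mulf_neq0 ?pnatr_eq0 -?lt0n ?expn_gt0 ?q_pos //.
by rewrite subr_eq0 pnatr_eq1 gtn_eqF.
Qed.

Theorem corollary2 (F : finFieldType) (n : nat) (C : {vspace 'rV[F]_n})
    (d : nat -> nat) (alpha : int) :
  let q := #|F| in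
  let k := \dim C in
  (forall i : nat, (1 <= i <= k)%N -> is_gen_weight C i (d i)) ->
  (forall i : nat, (1 <= i <= k)%N ->
     (d i)%:R = alpha%:~R * ((q ^ i)%:R - 1) / ((q ^ i.-1)%:R * (q%:R - 1)) :> rat) ->
  constant_weight C /\
  (forall c : 'rV[F]_n, c \in C -> c != 0 -> (cwt c)%:Z = alpha).
Proof.
move=> q k is_d d_eq.
have q_gt1 : (1 < q)%N by exact: finNzRing_gt1.
suff cwt_d1 c : c \in C -> c != 0 -> cwt c = d 1%N /\ alpha = (d 1%N)%:Z.
  split=> [c c' cC c'C c0 c'0 | c cC c0]; last by have [-> ->] := cwt_d1 c cC c0.
  by rewrite (cwt_d1 c cC c0).1 (cwt_d1 c' c'C c'0).1.
move=> cC c0.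
have k_gt0 : (0 < k)%N.
  by rewrite lt0n dimv_eq0; apply: contraNneq c0 => C0; rewrite -memv0 -C0.
have range1 : (1 <= 1 <= k)%N by [].
have rangek : (1 <= k <= k)%N by rewrite k_gt0 leqnn.
have alpha_d1 : alpha = (d 1%N)%:Z.
  apply/(@intr_inj rat); rewrite [RHS]d_eq // expn1 expn0 mul1r mulfK //.
  by rewrite subr_eq0 pnatr_eq1 gtn_eqF.
split=> //; pose P := [pred c' in C | c' != 0].
have sum_P : (\sum_(c' | P c') cwt c' = #|P| * d 1%N)%N.
  have := d_eq k rangek; rewrite alpha_d1 (gen_weight_full (is_d k rangek)).
  move=> /(natr_hierarchy_eq q_gt1 k_gt0) hierarchy.
  rewrite card_vspace_neq0 mulnC -hierarchy -sum_cwt [RHS](bigD1 0) ?mem0v //= cwt0.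
  by apply: eq_bigl => v; rewrite andbC.
have d1_le_cwt c' : P c' -> (d 1%N <= cwt c')%N.
  by move=> /andP [c'C c'0]; apply: gen_weight1_le_cwt (is_d 1%N range1) c'C c'0.
by apply: (eq_lb_of_sum d1_le_cwt sum_P); rewrite inE cC c0.
Qed.
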